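(* Let $p\colon X\to B$ be a Boolean set. For $e,f\in B$ let $e\setminus f$ denote the relative complement of $e\wedge f$ in the interval $[0,e]$. For $x,y\in X$ define $$x\circ y=y|^{p(y)}_{p(x)\wedge p(y)},\qquad y\setminus x=y|^{p(y)}_{p(y)\setminus p(x)},\qquad x\bullet y=x\vee(y\setminus x)$$ (the join being taken in $(X,\le)$; it exists). Then $(X,\circ,\bullet)$ is a right-hand skew Boolean algebra.
   Context: Convention: a ''Boolean algebra'' means a generalized Boolean algebra (relatively complemented distributive lattice with $0$, top not required). Presheaf of sets over a meet semilattice $E$: pairwise disjoint sets $X_e$ ($e\in E$), restriction maps $x\mapsto x|^e_f$, $X_e\to X_f$ for $e\ge f$, with $|^e_e=\mathrm{id}$ and $(x|^e_f)|^f_g=x|^e_g$; $X=\bigcup X_e$, $p(x)=e$ iff $x\in X_e$; global support means all $X_e\ne\emptyset$. Order: $x\le y$ iff $p(x)\le p(y)$ and $x=y|^{p(y)}_{p(x)}$. Compatibility: $x\sim y$ iff $x\wedge y$ exists in $(X,\le)$ and $p(x\wedge y)=p(x)\wedge p(y)$. A Boolean set is a presheaf of sets $p\colon X\to B$ with global support over a Boolean algebra $B$ such that $(X,\le)$ has a least element $0$, every compatible pair has a join in $(X,\le)$, and $p(x)=0$ implies $x=0$. A right-hand skew Boolean algebra is $(B,\circ,\bullet)$ where $(B,\circ)$, $(B,\bullet)$ are bands such that: (SB1) $x\circ(x\bullet y)=x=(y\bullet x)\circ x$ and $x\bullet(x\circ y)=x=(y\circ x)\bullet x$; (SB2) $x\circ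 y\circ x=y\circ x$ and $x\bullet y\bullet x=x\bullet y$; (SB3) $x\bullet y=y\bullet x$ iff $x\circ y=y\circ x$; (SB4) there is $0$ with $0\circ x=0=x\circ 0$; (SB5) each $x^{\downarrow}=\{x\circ s\circ x:s\in B\}$ is a Boolean algebra with top element. *)

(* A "(generalized) Boolean algebra" = relatively complemented
   distributive lattice with bottom = MathComp's cbDistrLatticeType, whose
   difference  e `\` f  is the complement of e `&` f in [\bot, e]. *)
From HB Require Import structures.
From mathcomp Require Import all_boot all_order.
Set Implicit Arguments. Unset Strict Implicit. Unset Printing Implicit Defensive.
Import Order.TTheory.
Local Open Scope order_scope.

Section BooleanSet.
Context {disp : Order.disp_t} {B : cbDistrLatticeType disp} {X : Type}.
Variables (p : X -> B) (res : X -> B -> X).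
(* X is the disjoint union of the X_e; p x = e iff x \in X_e;
   res x f = x|^{p x}_f (only meaningful for f <= p x). *)

Definition presheaf : Prop :=
  (forall x, res x (p x) = x) /\
  (forall x f, f <= p x -> p (res x f) = f) /\
  (forall x f g, g <= f -> f <= p x -> res (res x f) g = res x g).

Definition global_support : Prop := forall e : B, exists x, p x = e.

Definition psle (x y : X) : Prop := p x <= p y /\ x = res y (p x).

Definition is_meet (x y m : X) : Prop :=
  psle m x /\ psle m y /\ forall z, psle z x -> psle z y -> psle z m.

Definition is_join (x y j : X) : Prop :=
  psle x j /\ psle y j /\ forall z, psle x z -> psle y z -> psle j z.

Definition compatible (x y : X) : Prop :=
  exists m, is_meet x y m /\ p m = p x `&` p y.

Definition boolean_set : Prop :=
  presheaf /\ global_support /\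
  (exists z : X, (forall x, psle z x) /\ (forall x, p x = \bot -> x = z)) /\
  (forall x y, compatible x y -> exists j, is_join x y j).

Definition bs_circ (x y : X) : X := res y (p x `&` p y).
Definition bs_sdiff (y x : X) : X := res y (p y `\` p x).

End BooleanSet.

Section SkewBA.
Context {X : Type}.

Definition band (op : X -> X -> X) : Prop :=
  (forall x y z, op x (op y z) = op (op x y) z) /\ (forall x, op x x = x).

Definition boolean_algebra_on (S : X -> Prop) (meet join : X -> X -> X) : Prop :=
  (forall a b, S a -> S b -> S (meet a b) /\ S (join a b)) /\
  (forall a b, S a -> S b -> meet a b = meet b a /\ join a b = join b a) /\
  (forall a b c, S a -> S b -> S c ->
     meet a (meet b c) = meet (meet a b) c /\ join a (join b c) = join (join a b) c) /\
  (forall a b, S a -> S b -> meet a (join a b) = a /\ join a (meet a b) = a) /\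
  (forall a b c, S a -> S b -> S c ->
     meet a (join b c) = join (meet a b) (meet a c)) /\
  (exists bot top, S bot /\ S top /\
     (forall a, S a -> join bot a = a /\ meet top a = a) /\
     (forall a, S a -> exists a', S a' /\ meet a a' = bot /\ join a a' = top)).

Definition right_skew_boolean_algebra (circ bullet : X -> X -> X) : Prop :=
  band circ /\ band bullet /\
  (forall x y, circ x (bullet x y) = x /\ circ (bullet y x) x = x /\
               bullet x (circ x y) = x /\ bullet (circ y x) x = x) /\
  (forall x y, circ (circ x y) x = circ y x /\ bullet (bullet x y) x = bullet x y) /\
  (forall x y, bullet x y = bullet y x <-> circ x y = circ y x) /\
  (exists z, forall x, circ z x = z /\ circ x z = z) /\
  (forall x, boolean_algebra_on (fun t => exists s, t = circ (circ x s) x) circ bullet).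

End SkewBA.

(* An element x of a Boolean set is a section over p x, and both operations are
   computed supportwise: x ∘ y is y restricted to p x ∧ p y, and x • y is the
   section over p x ∨ p y that agrees with x on p x and with y off p x.
   Two sections over the same support are already determined by their
   restrictions to the two parts of a cover (the restrictions are compatible,
   and their join lies below both sections with full support), so every
   skew-lattice identity reduces to a lattice identity in B. On x↓ the map
   c ↦ x|_{c ∧ p x} is a surjective lattice homomorphism out of [0, p x],
   which makes x↓ a Boolean algebra. *)
From HB Require Import structures.
From mathcomp Require Import all_boot all_order.
Import Order.Theory.
Local Open Scope order_scope.
Set Implicit Arguments. Unset Strict Implicit.

Section Presheaf.
Context {disp : Order.disp_t} {B : cbDistrLatticeType disp} {X : Type}.
Variables (p : X -> B) (res : X -> B -> X).
Hypothesis res_id : forall x, res x (p x) = x.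
Hypothesis p_res : forall x f, f <= p x -> p (res x f) = f.
Hypothesis res_res : forall x f g, g <= f -> f <= p x -> res (res x f) g = res x g.

Local Notation le := (psle p res).

Lemma psle_refl x : le x x.
Proof. by split; rewrite ?res_id. Qed.

Lemma psle_anti x y : le x y -> le y x -> x = y.
Proof.
move=> [pxy ex] [pyx _].
have epxy : p x = p y by apply/le_anti; rewrite pxy pyx.
by rewrite ex epxy res_id.
Qed.

Lemma res_psle x c : c <= p x -> le (res x c) x.
Proof. by move=> cx; split; rewrite p_res. Qed.

Lemma p_is_join a b j : is_join p res a b j -> p j = p a `|` p b.
Proof.
move=> [[paj ea] [[pbj eb] jmin]].
have pabj : p a `|` p b <= p j by rewrite leUx paj pbj.
have [pj_le _] : le j (res j (p a `|` p b)).
  have aab : p a <= p a `|` p b by exact: leUl.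
  have bab : p b <= p a `|` p b by exact: leUr.
  by apply: jmin; split; rewrite ?p_res ?res_res.
rewrite p_res // in pj_le.
by apply/eqP; rewrite eq_le pj_le pabj.
Qed.

Lemma is_join_uniq a b j1 j2 : is_join p res a b j1 -> is_join p res a b j2 -> j1 = j2.
Proof.
move=> [a1 [b1 min1]] [a2 [b2 min2]].
by apply: psle_anti; [apply: min1 | apply: min2].
Qed.

Section BooleanSet.
Variable z : X.
Hypothesis z_psle : forall x, le z x.
Hypothesis p_eq0 : forall x, p x = \bot -> x = z.
Hypothesis support : global_support p.
Hypothesis join_compatible : forall x y, compatible p res x y -> exists j, is_join p res x y j.

Lemma p_zero : p z = \bot.
Proof.
have [x px] := support \bot; have [pzx _] := z_psle x.
by apply/le_anti; rewrite le0x -px pzx.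
Qed.

Lemma res_bot x : res x \bot = z.
Proof. by apply: p_eq0; rewrite p_res ?le0x. Qed.

Lemma compatible_res x a b : a <= p x -> b <= p x ->
  compatible p res (res x a) (res x b).
Proof.
move=> ax bx; have abx : a `&` b <= p x by rewrite (le_trans (leIl _ _)).
exists (res x (a `&` b)); rewrite !p_res //; split=> //.
split; first by split; rewrite ?p_res ?res_res ?leIl.
split; first by split; rewrite ?p_res ?res_res ?leIr.
move=> w [+ ewa] [+ ewb]; rewrite !p_res // => wa wb.
have wab : p w <= a `&` b by rewrite lexI wa wb.
by split; rewrite ?p_res // res_res // {1}ewa res_res.
Qed.

(* The join of the restrictions of u to a and b is below both u and v and has
   support a ∨ b = p u, hence it equals both. *)
Lemma eq_res_cover u v a b : p u = p v -> a `|` b = p u ->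
  res u a = res v a -> res u b = res v b -> u = v.
Proof.
move=> puv cover eua eub.
have au : a <= p u by rewrite -cover lexUl.
have bu : b <= p u by rewrite -cover lexUr.
have [j jP] := join_compatible (compatible_res au bu).
have [_ [_ jmin]] := jP.
have [_ ju] : le j u by apply: jmin; apply: res_psle.
have [_ jv] : le j v by apply: jmin; rewrite ?eua ?eub; apply: res_psle; rewrite -puv.
have pj : p j = p u by rewrite (p_is_join jP) !p_res.
by rewrite -[u]res_id -[v]res_id -pj -puv -pj -ju -jv.
Qed.

Lemma is_join_res a b j : p j = p a `|` p b -> res j (p a) = a -> res j (p b) = b ->
  is_join p res a b j.
Proof.
move=> pj ea eb.
have aj : p a <= p j by rewrite pj lexUl.
have bj : p b <= p j by rewrite pj lexUr.
do 2 (split; first by split).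
move=> w [aw ewa] [bw ewb].
have jw : p j <= p w by rewrite pj leUx aw bw.
split=> //; apply: (@eq_res_cover _ _ (p a) (p b)); rewrite ?p_res // -?pj //.
  by rewrite res_res // ea.
by rewrite res_res // eb.
Qed.

Lemma sdiff_join_exists x y : exists j, is_join p res x (bs_sdiff p res y x) j.
Proof.
apply: join_compatible; exists z.
rewrite p_zero /bs_sdiff p_res ?leBx // diffKI.
split=> //; do 2 (split; first exact: z_psle); move=> w [wx _] [wyx _].
rewrite p_res ?leBx // in wyx.
have : p w <= \bot by rewrite -(diffKI (p y) (p x)) lexI wx wyx.
by rewrite lex0 => /eqP /p_eq0 ->; apply: psle_refl.
Qed.

Section Operations.
Variable bullet : X -> X -> X.
Hypothesis bulletP : forall x y, is_join p res x (bs_sdiff p res y x) (bullet x y).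

Local Notation circ := (bs_circ p res).

Lemma p_bullet x y : p (bullet x y) = p x `|` p y.
Proof. by rewrite (p_is_join (bulletP x y)) /bs_sdiff p_res ?leBx // diffKU. Qed.

Lemma bullet_unique x y j : p j = p x `|` p y -> res j (p x) = x ->
  res j (p y `\` p x) = res y (p y `\` p x) -> bullet x y = j.
Proof.
move=> pj ex ey; apply: (is_join_uniq (bulletP x y)).
by apply: is_join_res; rewrite /bs_sdiff ?p_res ?leBx ?diffKU.
Qed.

Lemma res_bullet_l x y c : c <= p x -> res (bullet x y) c = res x c.
Proof. by move=> cx; have [[xj ex] _] := bulletP x y; rewrite {2}ex res_res. Qed.

Lemma res_bullet_r x y c : c <= p y -> c `&` p x = \bot -> res (bullet x y) c = res y c.
Proof.
move=> cy cx0; have [_ [[yxj eyx] _]] := bulletP x y.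
have cyx : c <= p y `\` p x by rewrite leBRL cy cx0 eqxx.
move: yxj eyx; rewrite /bs_sdiff p_res ?leBx // => yxj eyx.
by rewrite -(res_res cyx yxj) -eyx res_res // leBx.
Qed.

Lemma res_bullet x y c : c <= p x `|` p y ->
  res (bullet x y) c = bullet (res x (c `&` p x)) (res y (c `&` p y)).
Proof.
move=> cxy; have cj : c <= p (bullet x y) by rewrite p_bullet.
symmetry; apply: bullet_unique.
- by rewrite !p_res ?leIr // -meetUr meet_l.
- by rewrite p_res ?leIr // res_res ?leIl // res_bullet_l ?leIr.
- rewrite !p_res ?leIr //.
  set d := (c `&` p y) `\` (c `&` p x).
  have dy : d <= c `&` p y by exact: leBx.
  rewrite res_res ?(le_trans dy) ?leIl // res_res ?leIr //.
  rewrite res_bullet_r ?(le_trans dy) ?leIr // /d meetBx; apply/eqP.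
  by rewrite diff_eq0 -meetA [p y `&` _]meetC meetA leIl.
Qed.

Lemma bullet_psle u x : le u x -> bullet u x = x.
Proof. by move=> [ux eu]; apply: bullet_unique; rewrite ?join_r. Qed.

Lemma bullet_supp_le x w : p w <= p x -> bullet x w = x.
Proof.
move=> wx; apply: bullet_unique; rewrite ?res_id ?join_l //.
have /eqP -> : p w `\` p x == \bot by rewrite diff_eq0.
by rewrite !res_bot.
Qed.

Lemma p_circ x y : p (circ x y) = p x `&` p y.
Proof. by rewrite p_res ?leIr. Qed.

Lemma circ_band : band circ.
Proof.
split=> [x y w|x]; last by rewrite /bs_circ meetxx res_id.
by rewrite {3}/bs_circ p_circ /bs_circ p_res ?leIr // res_res ?leIr // meetA.
Qed.

Lemma bullet_assoc x y w : bullet x (bullet y w) = bullet (bullet x y) w.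
Proof.
set b := (p y `|` p w) `\` p x.
apply: (@eq_res_cover _ _ (p x) b).
- by rewrite !p_bullet joinA.
- by rewrite !p_bullet diffKU.
- by rewrite !res_bullet_l ?p_bullet ?leUl.
have bx0 : b `&` p x = \bot by rewrite diffIK.
have byw : b <= p y `|` p w by exact: leBx.
rewrite res_bullet_r ?p_bullet // res_bullet //.
rewrite res_bullet; last by rewrite p_bullet -joinA; apply: le_trans byw (leUr _ _).
congr (bullet _ _).
rewrite p_bullet meetUr bx0 join0x res_bullet_r ?leIr //.
by rewrite -meetA [p y `&` _]meetC meetA bx0 meet0x.
Qed.

Lemma bullet_band : band bullet.
Proof. by split=> [|x]; [exact: bullet_assoc | exact: bullet_supp_le]. Qed.

Lemma circ_bullet_absorption x y :
  [/\ circ x (bullet x y) = x, circ (bullet y x) x = x,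
      bullet x (circ x y) = x & bullet (circ y x) x = x].
Proof.
split.
- by rewrite /bs_circ p_bullet joinKI res_bullet_l // res_id.
- by rewrite /bs_circ p_bullet meetC joinC joinKI res_id.
- by apply: bullet_supp_le; rewrite p_circ leIl.
- by apply: bullet_psle; apply: res_psle; rewrite leIr.
Qed.

Lemma circ_right_handed x y : circ (circ x y) x = circ y x.
Proof. by rewrite /bs_circ p_circ meetC meetA meetxx meetC. Qed.

Lemma bullet_right_handed x y : bullet (bullet x y) x = bullet x y.
Proof. by apply: bullet_supp_le; rewrite p_bullet lexUl. Qed.

Lemma bullet_comm_circ_comm x y : bullet x y = bullet y x <-> circ x y = circ y x.
Proof.
rewrite /bs_circ; split=> E.
  by rewrite -(@res_bullet_l y x) ?leIr // -E res_bullet_l ?leIl // meetC.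
apply: bullet_unique.
- by rewrite p_bullet joinC.
- rewrite res_bullet ?p_bullet ?leUr // meetxx res_id E.
  by apply/bullet_psle/res_psle; rewrite leIr.
- by rewrite res_bullet_l ?leBx.
Qed.

Lemma circ_zero x : circ z x = z /\ circ x z = z.
Proof. by rewrite /bs_circ p_zero meet0x meetx0 !res_bot. Qed.

Definition res_meet x c := res x (c `&` p x).

Lemma p_res_meet x c : p (res_meet x c) = c `&` p x.
Proof. by rewrite p_res ?leIr. Qed.

Lemma circ_res_meet x a b : circ (res_meet x a) (res_meet x b) = res_meet x (a `&` b).
Proof.
rewrite /bs_circ !p_res_meet /res_meet res_res ?leIr //; congr (res x _).
by rewrite meetACA meetxx meetAC.
Qed.

Lemma bullet_res_meet x a b :
  bullet (res_meet x a) (res_meet x b) = res_meet x (a `|` b).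
Proof.
have ax : a `&` p x <= (a `|` b) `&` p x by rewrite leI2 ?lexUl.
have bx : b `&` p x <= (a `|` b) `&` p x by rewrite leI2 ?lexUr.
apply: bullet_unique; rewrite !p_res_meet /res_meet.
- by rewrite meetUl.
- by rewrite res_res ?leIr.
- by rewrite !res_res ?leIr ?leBx //; apply: le_trans (leBx _ _) bx.
Qed.

Lemma downset_res_meet x t :
  (exists s, t = circ (circ x s) x) <-> exists c, t = res_meet x c.
Proof.
split=> [[s ->]|[c ->]].
  by exists (p s); rewrite circ_right_handed /bs_circ /res_meet meetC.
have [s ps] := support c; exists s.
by rewrite circ_right_handed /bs_circ /res_meet ps meetC.
Qed.

Lemma downset_boolean x :
  boolean_algebra_on (fun t => exists s, t = circ (circ x s) x) circ bullet.
Proof.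
have res_meet_eq a b : a `&` p x = b `&` p x -> res_meet x a = res_meet x b.
  by rewrite /res_meet => ->.
have inS c : exists s, res_meet x c = circ (circ x s) x.
  by apply/downset_res_meet; exists c.
split.
  move=> a b /downset_res_meet[ca ->] /downset_res_meet[cb ->].
  by rewrite circ_res_meet bullet_res_meet; split; apply: inS.
split.
  move=> a b /downset_res_meet[ca ->] /downset_res_meet[cb ->].
  by rewrite !circ_res_meet !bullet_res_meet meetC joinC.
split.
  move=> a b c /downset_res_meet[ca ->] /downset_res_meet[cb ->] /downset_res_meet[cc ->].
  by rewrite !circ_res_meet !bullet_res_meet meetA joinA.
split.
  move=> a b /downset_res_meet[ca ->] /downset_res_meet[cb ->].
  by rewrite bullet_res_meet circ_res_meet circ_res_meet bullet_res_meet joinKI meetKU.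
split.
  move=> a b c /downset_res_meet[ca ->] /downset_res_meet[cb ->] /downset_res_meet[cc ->].
  by rewrite !bullet_res_meet !circ_res_meet !bullet_res_meet meetUr.
exists (res_meet x \bot), (res_meet x (p x)); do 2 (split; first exact: inS).
split.
  move=> a /downset_res_meet[ca ->]; rewrite bullet_res_meet circ_res_meet join0x.
  by split=> //; apply: res_meet_eq; rewrite meetAC meetxx meetC.
move=> a /downset_res_meet[ca ->]; exists (res_meet x (p x `\` ca)).
rewrite circ_res_meet bullet_res_meet diffKI diffKU; split=> //.
by split=> //; apply: res_meet_eq; rewrite meetxx meetC joinC joinKI.
Qed.

Lemma bs_right_skew_boolean_algebra : right_skew_boolean_algebra circ bullet.
Proof.
split; first exact: circ_band.
split; first exact: bullet_band.
split; first by move=> x y; have [] := circ_bullet_absorption x y.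
split; first by move=> x y; rewrite circ_right_handed bullet_right_handed.
split; first exact: bullet_comm_circ_comm.
by split; [exists z; exact: circ_zero | exact: downset_boolean].
Qed.

End Operations.
End BooleanSet.
End Presheaf.

Theorem proposition2p5 (disp : Order.disp_t) (B : cbDistrLatticeType disp)
  (X : Type) (p : X -> B) (res : X -> B -> X) :
  boolean_set p res ->
  (forall x y : X, exists j, is_join p res x (bs_sdiff p res y x) j) /\
  (forall bullet : X -> X -> X,
     (forall x y : X, is_join p res x (bs_sdiff p res y x) (bullet x y)) ->
     right_skew_boolean_algebra (bs_circ p res) bullet).
Proof.
move=> [[res_id [p_res res_res]] [support [[z [z_psle p_eq0]] joins]]].
split; first exact: sdiff_join_exists.
by move=> bullet bulletP; apply: bs_right_skew_boolean_algebra bulletP.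
Qed.
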